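(* Fix $\eta\in[0,1]$ and an integer $N\ge0$. Let $\mathcal V$ be the set of PMFs $v$ on $\mathcal S\times\mathcal U\times\mathcal Q\times\mathcal X\times\mathcal S\times\mathcal U\times\mathcal Q$ whose support is contained in the set $\mathcal A$ of tuples $(s,u,q,x,s^{+},u^{+},q^{+})$ with $u\in[0:q]$ and $u^{+}\in\{0,u+1\}$ if $q\le N-1$, $u\in[0:N]$ and $u^{+}=0$ if $q=N$, $x=f(u^{+},s)$ and $q^{+}=g_L(q,x)$, and which satisfy: (1) (stationarity) $v_{S,U,Q}(s,u,q)=v_{S^{+},U^{+},Q^{+}}(s,u,q)$ for all $(s,u,q)$; (2) (state law) $v(s,u,q,x,s^{+},u^{+},q^{+})=\Big(\sum_{\tilde s^{+}}v(s,u,q,x,\tilde s^{+},u^{+},q^{+})\Big)P(s^{+}\mid x,s)$ for all tuples in $\mathcal A$; (3) (policy) $v_{S,U,Q,U^{+}}(0,u,q,u^{+})=\bar\eta^{\,u+1}\,v_{U,Q,U^{+}}(u,q,u^{+})$ for all $(u,q,u^{+})$; (4) $\sum v=1$, $v\ge0$. Then the problem of maximizing $I_v(U^{+},U;X\mid Q)$ (conditional mutual information under $v$) over $v\in\mathcal V$ is a convex optimization problem: all constraints are linear equalities/nonnegativity in $v$, and the objective is concave in $v$ on $\mathcal V$.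
   Context: $\bar\eta=1-\eta$, $[a:b]=\{a,\dots,b\}$, $\mathcal S=\mathcal X=\{0,1\}$, $\mathcal U=\mathcal Q=[0:N]$. $f(u^{+},s)=s\,\mathbb{1}\{u^{+}=0\}$. $g_L:\mathcal Q\times\{0,1\}\to\mathcal Q$ is given by $g_L(q,1)=0$ for all $q$, $g_L(q,0)=q+1$ for $q\in[0:N-1]$, $g_L(N,0)=0$. $P(s^{+}\mid x,s)$ is the battery law of the binary energy-harvesting channel: $P(S^{+}=0\mid x,s)=\bar\eta\,\mathbb{1}\{x=s\}$ and $P(S^{+}=1\mid x,s)=1-\bar\eta\,\mathbb{1}\{x=s\}$ for $x\le s$. Marginals of $v$ are denoted by subscripts, e.g. $v_{S,U,Q}$. *)

From HB Require Import structures.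
From mathcomp Require Import all_boot all_order all_algebra.
From mathcomp Require Import reals exp.

Set Implicit Arguments.
Unset Strict Implicit.
Unset Printing Implicit Defensive.

Import Order.TTheory GRing.Theory Num.Theory.
Local Open Scope ring_scope.

Section Defs.
Variable R : realType.

Definition marg (T A : finType) (v : T -> R) (f : T -> A) (a : A) : R :=
  \sum_(t : T | f t == a) v t.

Definition cond_mutual_info (T A B C : finType) (v : T -> R)
    (fa : T -> A) (fb : T -> B) (fc : T -> C) : R :=
  \sum_(a : A) \sum_(b : B) \sum_(c : C)
    let pabc := marg v (fun t => (fa t, fb t, fc t)) (a, b, c) in
    if 0 < pabc then
      pabc * ln (pabc * marg v fc c /
                 (marg v (fun t => (fa t, fc t)) (a, c) *
                  marg v (fun t => (fb t, fc t)) (b, c)))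
    else 0.

Variable N : nat.

(* S = X = {0,1} = bool (0 = false), U = Q = [0:N] = 'I_N.+1 *)
Definition tup : finType :=
  (bool * 'I_N.+1 * 'I_N.+1 * bool * bool * 'I_N.+1 * 'I_N.+1)%type.

Definition tS  (t : tup) : bool      := t.1.1.1.1.1.1.
Definition tU  (t : tup) : 'I_N.+1   := t.1.1.1.1.1.2.
Definition tQ  (t : tup) : 'I_N.+1   := t.1.1.1.1.2.
Definition tX  (t : tup) : bool      := t.1.1.1.2.
Definition tSp (t : tup) : bool      := t.1.1.2.
Definition tUp (t : tup) : 'I_N.+1   := t.1.2.
Definition tQp (t : tup) : 'I_N.+1   := t.2.

Definition set_Sp (t : tup) (s' : bool) : tup :=
  (tS t, tU t, tQ t, tX t, s', tUp t, tQp t).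

Definition f_enc (up : nat) (s : bool) : bool := s && (up == 0)%N.

Definition gL (q : nat) (x : bool) : nat :=
  if x then 0%N else if (q < N)%N then q.+1 else 0%N.

(* battery law P(s+ | x, s) of the binary energy-harvesting channel *)
Definition Pbat (eta : R) (sp x s : bool) : R :=
  if sp then 1 - (1 - eta) * (x == s)%:R else (1 - eta) * (x == s)%:R.

Definition inA (t : tup) : bool :=
  [&& (if (tQ t < N)%N
       then (tU t <= tQ t)%N && ((tUp t == 0%N :> nat) || (tUp t == (tU t).+1 :> nat))
       else (tU t <= N)%N && (tUp t == 0%N :> nat)),
      tX t == f_enc (tUp t) (tS t) &
      (tQp t == gL (tQ t) (tX t) :> nat)].

(* the linear equality constraints defining V (support, (1), (2), (3), sum = 1) *)
Definition V_eq (eta : R) (v : tup -> R) : Prop :=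
  [/\ (forall t, ~~ inA t -> v t = 0),
      (forall s u q,
          marg v (fun t => (tS t, tU t, tQ t)) (s, u, q)
        = marg v (fun t => (tSp t, tUp t, tQp t)) (s, u, q)),
      (forall t, inA t ->
          v t = (\sum_(s' : bool) v (set_Sp t s')) * Pbat eta (tSp t) (tX t) (tS t)),
      (forall u q up,
          marg v (fun t => (tS t, tU t, tQ t, tUp t)) (false, u, q, up)
        = (1 - eta) ^+ (u.+1) * marg v (fun t => (tU t, tQ t, tUp t)) (u, q, up)) &
      \sum_(t : tup) v t = 1].

Definition inV (eta : R) (v : tup -> R) : Prop :=
  V_eq eta v /\ (forall t, 0 <= v t).

Definition objective (v : tup -> R) : R :=
  cond_mutual_info v (fun t => (tUp t, tU t)) tX tQ.

End Defs.

From HB Require Import structures.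
From mathcomp Require Import all_boot all_order all_algebra.
From mathcomp Require Import reals exp.
From mathcomp Require Import ring lra.

(* I(U+, U; X | Q) = H(X | Q) - H(X | U+, U, Q).  The first term is concave in v because
   (x, y) |-> x ln (y / x) is jointly concave (it is superadditive and homogeneous, by
   ln z <= z - 1).  On V the support and policy constraints pin the conditional law of X
   given (U+, U, Q) to a kernel that does not depend on v, so the second term is linear
   in v. *)

Set Implicit Arguments.
Unset Strict Implicit.
Unset Printing Implicit Defensive.
Import Order.TTheory GRing.Theory Num.Theory.
Local Open Scope ring_scope.

Section XlnRatio.
Variable R : realType.
Implicit Types a b c d k l p q r s t x y : R.

Definition xln_ratio x y : R := x * ln (y / x).

Lemma xln_ratioZ l x y : l * xln_ratio x y = xln_ratio (l * x) (l * y).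
Proof.
rewrite /xln_ratio mulrA; have [->|l0] := eqVneq l 0; first by rewrite !mul0r.
have [->|x0] := eqVneq x 0; first by rewrite !(mulr0, mul0r).
by rewrite invfM mulrACA divff // mul1r.
Qed.

Lemma xln_ratioMl k y : xln_ratio (k * y) y = xln_ratio k 1 * y.
Proof.
rewrite /xln_ratio; have [->|y0] := eqVneq y 0; first by rewrite !(mulr0, mul0r).
have [->|k0] := eqVneq k 0; first by rewrite !mul0r.
by rewrite mulrAC invfM mulrCA divff // mulr1 div1r.
Qed.

Lemma ln_le_subr1 x : 0 < x -> ln x <= x - 1.
Proof.
move=> x_gt0; have := @le_ln1Dx R (x - 1); rewrite [1 + _]addrC subrK; apply; lra.
Qed.

Lemma xln_ratio_le_tangent a c s t : 0 <= a <= c -> 0 < s -> 0 < t ->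
  xln_ratio a c <= a * ln (t / s) + c * s / t - a.
Proof.
move=> /andP[a_ge0 le_ac] s_gt0 t_gt0; rewrite /xln_ratio.
have [->|a_neq0] := eqVneq a 0; first by rewrite !mul0r add0r subr0 !(divr_ge0, mulr_ge0) //; lra.
have a_gt0 : 0 < a by rewrite lt_def a_neq0.
have c_gt0 : 0 < c by apply: lt_le_trans le_ac.
suff : a * ln (c / a) - a * ln (t / s) <= c * s / t - a by lra.
rewrite -mulrBr -ln_div ?posrE ?divr_gt0 //.
have ratio_gt0 : 0 < c / a / (t / s) by rewrite !divr_gt0.
have -> : c * s / t - a = a * (c / a / (t / s) - 1) by field; rewrite !gt_eqF.
by rewrite ler_wpM2l ?ln_le_subr1 // ltW.
Qed.

Lemma xln_ratio_superadditive a b c d : 0 <= a <= c -> 0 <= b <= d ->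
  xln_ratio a c + xln_ratio b d <= xln_ratio (a + b) (c + d).
Proof.
move=> ac bd; have [ab_le0|ab_gt0] := leP (a + b) 0.
  have [-> ->] : a = 0 /\ b = 0.
    by case/andP: ac => ? _; case/andP: bd => ? _; split; lra.
  by rewrite /xln_ratio !(addr0, mul0r).
have cd_gt0 : 0 < c + d by case/andP: ac => _ ?; case/andP: bd => _ ?; lra.
apply: le_trans (lerD (xln_ratio_le_tangent ac ab_gt0 cd_gt0)
                      (xln_ratio_le_tangent bd ab_gt0 cd_gt0)) _.
by rewrite le_eqVlt; apply/orP; left; apply/eqP; rewrite /xln_ratio; field; rewrite gt_eqF.
Qed.

Lemma xln_ratio_concave l x1 y1 x2 y2 :
  0 <= l <= 1 -> 0 <= x1 <= y1 -> 0 <= x2 <= y2 ->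
  l * xln_ratio x1 y1 + (1 - l) * xln_ratio x2 y2
    <= xln_ratio (l * x1 + (1 - l) * x2) (l * y1 + (1 - l) * y2).
Proof.
move=> /andP[l_ge0 l_le1] /andP[? ?] /andP[? ?].
by rewrite !xln_ratioZ; apply: xln_ratio_superadditive; apply/andP; split; nra.
Qed.

Lemma cmi_summand_split p q r s : 0 <= p <= q -> p <= r <= s ->
  (if 0 < p then p * ln (p * s / (q * r)) else 0) = p * ln (s / r) - xln_ratio p q.
Proof.
move=> /andP[p_ge0 le_pq] /andP[le_pr le_rs]; rewrite /xln_ratio.
have [->|p_neq0] := eqVneq p 0; first by rewrite ltxx !mul0r subr0.
have p_gt0 : 0 < p by rewrite lt_def p_neq0.
have [q_gt0 r_gt0] : 0 < q /\ 0 < r by split; lra.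
have s_gt0 : 0 < s by lra.
rewrite p_gt0 -mulrBr -ln_div ?posrE ?divr_gt0 //; congr (_ * ln _).
by field; rewrite !gt_eqF.
Qed.

End XlnRatio.

Lemma big_lincomb (R : realType) (I : finType) (P : pred I) (l1 l2 : R) (F1 F2 : I -> R) :
  \sum_(i | P i) (l1 * F1 i + l2 * F2 i)
    = l1 * \sum_(i | P i) F1 i + l2 * \sum_(i | P i) F2 i.
Proof. by rewrite big_split /= -!mulr_sumr. Qed.

Section Marginals.
Variables (R : realType) (T : finType).
Implicit Types v : T -> R.

Lemma marg_lincomb (A : finType) (f : T -> A) (l1 l2 : R) v1 v2 a :
  marg (fun t => l1 * v1 t + l2 * v2 t) f a = l1 * marg v1 f a + l2 * marg v2 f a.
Proof. exact: big_lincomb. Qed.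

Lemma marg_ge0 (A : finType) (f : T -> A) v a : (forall t, 0 <= v t) -> 0 <= marg v f a.
Proof. by move=> v_ge0; apply: sumr_ge0. Qed.

Lemma le_marg (A B : finType) (f : T -> A) (g : T -> B) v a b :
  (forall t, 0 <= v t) -> (forall t, f t == a -> g t == b) -> marg v f a <= marg v g b.
Proof.
move=> v_ge0 fg; rewrite /marg big_mkcond [X in _ <= X]big_mkcond /=.
apply: ler_sum => t _; case: ifP => [/fg -> //|_]; by case: ifP.
Qed.

Lemma eq_marg_on_support (A B : finType) (f : T -> A) (g : T -> B) v a b :
  (forall t, v t != 0 -> (f t == a) = (g t == b)) -> marg v f a = marg v g b.
Proof.
move=> fg; rewrite /marg big_mkcond [RHS]big_mkcond /=; apply: eq_bigr => t _.
by have [->|/fg ->] := eqVneq (v t) 0; rewrite ?if_same.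
Qed.

Lemma sum_marg_fst (A B : finType) (f : T -> A) (g : T -> B) v b :
  \sum_(a : A) marg v (fun t => (f t, g t)) (a, b) = marg v g b.
Proof.
rewrite [RHS](partition_big f xpredT) //=; apply: eq_bigr => a _.
by apply: eq_bigl => t; rewrite xpair_eqE andbC.
Qed.

Definition cond_entropy (B C : finType) v (fb : T -> B) (fc : T -> C) : R :=
  \sum_(b : B) \sum_(c : C) xln_ratio (marg v (fun t => (fb t, fc t)) (b, c)) (marg v fc c).

Definition is_cond_law (B C : finType) (k : B -> C -> R) v (fb : T -> B) (fc : T -> C) :=
  forall b c, marg v (fun t => (fb t, fc t)) (b, c) = k b c * marg v fc c.

Section CondEntropy.
Variables (B C : finType) (fb : T -> B) (fc : T -> C).

Lemma cond_entropy_concave v1 v2 l :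
  0 <= l <= 1 -> (forall t, 0 <= v1 t) -> (forall t, 0 <= v2 t) ->
  l * cond_entropy v1 fb fc + (1 - l) * cond_entropy v2 fb fc
    <= cond_entropy (fun t => l * v1 t + (1 - l) * v2 t) fb fc.
Proof.
move=> l01 v1_ge0 v2_ge0; rewrite /cond_entropy -big_lincomb; apply: ler_sum => b _.
rewrite -big_lincomb; apply: ler_sum => c _; rewrite !marg_lincomb.
have marg_bounds v : (forall t, 0 <= v t) ->
    0 <= marg v (fun t => (fb t, fc t)) (b, c) <= marg v fc c.
  move=> v_ge0; rewrite marg_ge0 //=.
  by apply: le_marg => // t; rewrite xpair_eqE => /andP[].
exact: xln_ratio_concave l01 (marg_bounds _ v1_ge0) (marg_bounds _ v2_ge0).
Qed.

Lemma cond_entropy_of_law k v : is_cond_law k v fb fc ->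
  cond_entropy v fb fc = \sum_(b : B) \sum_(c : C) xln_ratio (k b c) 1 * marg v fc c.
Proof. by move=> law; apply: eq_bigr => b _; apply: eq_bigr => c _; rewrite law xln_ratioMl. Qed.

Lemma is_cond_law_lincomb k v1 v2 l1 l2 :
  is_cond_law k v1 fb fc -> is_cond_law k v2 fb fc ->
  is_cond_law k (fun t => l1 * v1 t + l2 * v2 t) fb fc.
Proof. by move=> law1 law2 b c; rewrite !marg_lincomb law1 law2; ring. Qed.

Lemma cond_entropy_lincomb k v1 v2 l1 l2 :
  is_cond_law k v1 fb fc -> is_cond_law k v2 fb fc ->
  cond_entropy (fun t => l1 * v1 t + l2 * v2 t) fb fc
    = l1 * cond_entropy v1 fb fc + l2 * cond_entropy v2 fb fc.
Proof.
move=> law1 law2; rewrite (cond_entropy_of_law (is_cond_law_lincomb l1 l2 law1 law2)).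
rewrite (cond_entropy_of_law law1) (cond_entropy_of_law law2) -big_lincomb.
apply: eq_bigr => b _; rewrite -big_lincomb; apply: eq_bigr => c _.
by rewrite marg_lincomb; ring.
Qed.

End CondEntropy.
End Marginals.

Section CondMutualInfo.
Variables (R : realType) (T : finType) (A B C : finType).
Variables (fa : T -> A) (fb : T -> B) (fc : T -> C).
Implicit Types v : T -> R.

Lemma cond_mutual_infoE v : (forall t, 0 <= v t) ->
  cond_mutual_info v fa fb fc
    = cond_entropy v fb fc - cond_entropy v fb (fun t => (fa t, fc t)).
Proof.
move=> v_ge0; rewrite /cond_mutual_info.
set pabc := fun a b c => marg v (fun t => (fa t, fb t, fc t)) (a, b, c).
set pac := fun a c => marg v (fun t => (fa t, fc t)) (a, c).
set pbc := fun b c => marg v (fun t => (fb t, fc t)) (b, c).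
transitivity (\sum_a \sum_b \sum_c pabc a b c * ln (marg v fc c / pbc b c)
              - \sum_a \sum_b \sum_c xln_ratio (pabc a b c) (pac a c)).
  rewrite -sumrB; apply: eq_bigr => a _; rewrite -sumrB; apply: eq_bigr => b _.
  rewrite -sumrB; apply: eq_bigr => c _ /=.
  apply: cmi_summand_split; rewrite ?marg_ge0 //=; [|apply/andP; split];
    by apply: le_marg => // t; rewrite !xpair_eqE; do ![case: (_ == _)].
congr (_ - _).
- rewrite exchange_big; apply: eq_bigr => b _; rewrite exchange_big; apply: eq_bigr => c _ /=.
  rewrite -mulr_suml /xln_ratio; congr (_ * _); rewrite -(sum_marg_fst fa).
  by apply: eq_bigr => a _; apply: eq_bigl => t; rewrite !xpair_eqE andbA.
- rewrite exchange_big /cond_entropy; apply: eq_bigr => b _; rewrite pair_big /=.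
  apply: eq_bigr => -[a c] _; congr xln_ratio; rewrite /pabc /=.
  by apply: eq_bigl => t; rewrite !xpair_eqE andbCA andbA.
Qed.

Theorem cond_mutual_info_concave (k : B -> A * C -> R) v1 v2 l :
  0 <= l <= 1 -> (forall t, 0 <= v1 t) -> (forall t, 0 <= v2 t) ->
  is_cond_law k v1 fb (fun t => (fa t, fc t)) ->
  is_cond_law k v2 fb (fun t => (fa t, fc t)) ->
  l * cond_mutual_info v1 fa fb fc + (1 - l) * cond_mutual_info v2 fa fb fc
    <= cond_mutual_info (fun t => l * v1 t + (1 - l) * v2 t) fa fb fc.
Proof.
move=> l01 v1_ge0 v2_ge0 law1 law2.
have v_ge0 t : 0 <= l * v1 t + (1 - l) * v2 t.
  by case/andP: l01 => ? ?; rewrite addr_ge0 ?mulr_ge0 ?subr_ge0.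
rewrite !cond_mutual_infoE // (cond_entropy_lincomb l (1 - l) law1 law2).
have := cond_entropy_concave fb fc l01 v1_ge0 v2_ge0; lra.
Qed.

End CondMutualInfo.

Section Model.
Variables (R : realType) (N : nat) (eta : R).
Implicit Types (v : tup N -> R) (t : tup N).

(* With U+ = 0 the input is X = S, and constraint (3) fixes P(S = 0 | U = u) = (1 - eta)^(u+1);
   otherwise X = 0. *)
Definition policy_law (x : bool) (a : 'I_N.+1 * 'I_N.+1 * 'I_N.+1) : R :=
  let: (up, u, _) := a in
  if up == 0 :> nat then (if x then 1 - (1 - eta) ^+ u.+1 else (1 - eta) ^+ u.+1)
  else (~~ x)%:R.

Lemma V_eq_input_enc v t : V_eq eta v -> v t != 0 -> tX t = f_enc (tUp t) (tS t).
Proof.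
case=> supp _ _ _ _ vt_neq0; have : inA t.
  by apply: contraR vt_neq0 => /supp ->.
by case/and3P => _ /eqP.
Qed.

Lemma V_eq_policy_law v :
  V_eq eta v -> is_cond_law policy_law v (@tX N) (fun t => (tUp t, tU t, tQ t)).
Proof.
move=> hV x [[up u] q] /=; have [_ _ _ policy _] := hV.
set pX := fun x => marg v (fun t => (tX t, (tUp t, tU t, tQ t))) (x, (up, u, q)).
set pA := marg v (fun t => (tUp t, tU t, tQ t)) (up, u, q).
have pA_split : pA = pX true + pX false by rewrite /pA -(sum_marg_fst (@tX N)) big_bool.
case: ifP => [up0|up_neq0].
- have pX_false : pX false = (1 - eta) ^+ u.+1 * pA.
    have -> : pA = marg v (fun t => (tU t, tQ t, tUp t)) (u, q, up).
      by apply: eq_bigl => t; rewrite !xpair_eqE; do ![case: (_ == _)].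
    rewrite -policy; apply: eq_marg_on_support => t /(V_eq_input_enc hV) ->.
    rewrite !xpair_eqE /f_enc; have [->|] := eqVneq (tUp t) up; last by rewrite !andbF.
    by rewrite up0 andbT; do ![case: (_ == _)].
  case: x => /=; last exact: pX_false.
  rewrite -/(pX true); apply: (addIr (pX false)); rewrite -pA_split pX_false; ring.
- have pX_true : pX true = 0.
    apply: big1 => t /eqP[xt upt _ _]; apply/eqP; apply: contraFT up_neq0.
    by move=> /(V_eq_input_enc hV); rewrite xt upt /f_enc => /esym/andP[].
  case: x => /=; first by rewrite -/(pX true) pX_true mul0r.
  by rewrite -/(pX false) pA_split pX_true add0r mul1r.
Qed.

Lemma V_eq_affine v1 v2 l :
  V_eq eta v1 -> V_eq eta v2 -> V_eq eta (fun t => l * v1 t + (1 - l) * v2 t).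
Proof.
move=> [supp1 stat1 bat1 pol1 sum1] [supp2 stat2 bat2 pol2 sum2]; split.
- by move=> t tA; rewrite supp1 ?supp2 // !mulr0 addr0.
- by move=> s u q; rewrite !marg_lincomb stat1 stat2.
- by move=> t tA; rewrite bat1 ?bat2 // big_lincomb; ring.
- by move=> u q up; rewrite !marg_lincomb pol1 pol2; ring.
- by rewrite big_lincomb sum1 sum2; ring.
Qed.

Lemma inV_convex v1 v2 l : 0 <= l <= 1 ->
  inV eta v1 -> inV eta v2 -> inV eta (fun t => l * v1 t + (1 - l) * v2 t).
Proof.
move=> /andP[l_ge0 l_le1] [hV1 v1_ge0] [hV2 v2_ge0]; split; first exact: V_eq_affine.
by move=> t; rewrite addr_ge0 ?mulr_ge0 ?subr_ge0.
Qed.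

End Model.

Theorem lemma1 (R : realType) (eta : R) (N : nat) :
  0 <= eta <= 1 ->
  (* the equality constraints are affine: closed under all affine combinations *)
  (forall (v1 v2 : tup N -> R) (l : R),
      V_eq eta v1 -> V_eq eta v2 ->
      V_eq eta (fun w => l * v1 w + (1 - l) * v2 w)) /\
  (* hence V (equalities + nonnegativity) is convex ... *)
  (forall (v1 v2 : tup N -> R) (l : R), 0 <= l <= 1 ->
      inV eta v1 -> inV eta v2 ->
      inV eta (fun w => l * v1 w + (1 - l) * v2 w)) /\
  (* ... and the objective is concave on V *)
  (forall (v1 v2 : tup N -> R) (l : R), 0 <= l <= 1 ->
      inV eta v1 -> inV eta v2 ->
      l * objective v1 + (1 - l) * objective v2
        <= objective (fun w => l * v1 w + (1 - l) * v2 w)).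
Proof.
(* The range of eta is irrelevant: on V the law of X given (U+, U, Q) is policy_law for any eta. *)
move=> _; split; first exact: V_eq_affine.
split; first exact: inV_convex.
move=> v1 v2 l l01 [hV1 v1_ge0] [hV2 v2_ge0].
exact: cond_mutual_info_concave l01 v1_ge0 v2_ge0 (V_eq_policy_law hV1) (V_eq_policy_law hV2).
Qed.
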